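(* If $p,q\in\mathbf P(S)$ for a DRC-semigroup $S$, then the following are equivalent: (i) $pq=qp$; (ii) $p\theta_q=q\theta_p$ and $p\delta_q=q\delta_p$; (iii) $p\theta_q=q\theta_p=p\delta_q=q\delta_p$; (iv) $p\theta_q=q\theta_p=p\delta_q=q\delta_p=pq=qp$.
   Context: A DRC-semigroup is $(S,\cdot,D,R)$, $(S,\cdot)$ a semigroup, $D,R:S\to S$ with, for all $a,b$: $D(a)a=a$, $aR(a)=a$; $D(ab)=D(aD(b))$, $R(ab)=R(R(a)b)$; $D(ab)=D(a)D(ab)D(a)$, $R(ab)=R(b)R(ab)R(b)$; $R(D(a))=D(a)$, $D(R(a))=R(a)$. $\mathbf P(S)=\{D(a):a\in S\}$, and for $p,q\in\mathbf P(S)$: $q\theta_p=R(qp)$, $q\delta_p=D(pq)$. *)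

Record DRCSemigroup := {
  carrier :> Type;
  mul : carrier -> carrier -> carrier;
  Dop : carrier -> carrier;
  Rop : carrier -> carrier;
  mul_assoc : forall a b c, mul a (mul b c) = mul (mul a b) c;
  D_left_id : forall a, mul (Dop a) a = a;
  R_right_id : forall a, mul a (Rop a) = a;
  D_mul : forall a b, Dop (mul a b) = Dop (mul a (Dop b));
  R_mul : forall a b, Rop (mul a b) = Rop (mul (Rop a) b);
  D_sandwich : forall a b, Dop (mul a b) = mul (mul (Dop a) (Dop (mul a b))) (Dop a);
  R_sandwich : forall a b, Rop (mul a b) = mul (mul (Rop b) (Rop (mul a b))) (Rop b);
  R_D : forall a, Rop (Dop a) = Dop a;
  D_R : forall a, Dop (Rop a) = Rop a
}.

Definition projection (S : DRCSemigroup) (p : S) : Prop := exists a : S, p = Dop S a.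

(* q theta_p = R(qp),  q delta_p = D(pq) *)
Definition theta (S : DRCSemigroup) (q p : S) : S := Rop S (mul S q p).
Definition delta (S : DRCSemigroup) (q p : S) : S := Dop S (mul S p q).

(* For projections p, q the product factors as pq = D(pq) R(pq), since D(pq) p = D(pq)
   and q R(pq) = R(pq); so the equalities R(pq) = R(qp) and D(qp) = D(pq) of (ii) force
   pq = qp.  Conversely, if pq = qp then D(pq) = D(qp) is absorbed on the right by both
   p and q, hence D(pq) = D(pq) qp = pq; dually R(pq) = pq, which yields (iii) and (iv). *)

From Stdlib Require Import Setoid.

Section DRCProjections.

Variable S : DRCSemigroup.

Local Notation "a * b" := (mul S a b).
Local Notation D := (Dop S).
Local Notation R := (Rop S).

Lemma projection_R (p : S) : projection S p -> R p = p.
Proof. intros [a ->]. apply R_D. Qed.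

Lemma projection_D (p : S) : projection S p -> D p = p.
Proof.
  intros Hp. rewrite <- (projection_R p Hp) at 1. rewrite D_R. exact (projection_R p Hp).
Qed.

Lemma projection_idem (p : S) : projection S p -> p * p = p.
Proof. intros Hp. rewrite <- (projection_D p Hp) at 1. apply D_left_id. Qed.

Lemma D_proj_mulr (p a : S) : projection S p -> D (p * a) * p = D (p * a).
Proof.
  intros Hp. rewrite D_sandwich, (projection_D p Hp), <- mul_assoc.
  now rewrite (projection_idem p Hp).
Qed.

Lemma R_proj_mull (a q : S) : projection S q -> q * R (a * q) = R (a * q).
Proof.
  intros Hq. rewrite R_sandwich, (projection_R q Hq), !mul_assoc.
  now rewrite (projection_idem q Hq).
Qed.

Lemma proj_mul_DR (p q : S) : projection S p -> projection S q ->
  p * q = D (p * q) * R (p * q).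
Proof.
  intros Hp Hq.
  assert (pR : p * R (p * q) = p * q).
  { rewrite <- (R_proj_mull p q Hq), mul_assoc. apply R_right_id. }
  rewrite <- (D_proj_mulr p q Hp), <- mul_assoc, pR. symmetry. apply D_left_id.
Qed.

Lemma proj_commute_of_DR (p q : S) : projection S p -> projection S q ->
  R (p * q) = R (q * p) -> D (q * p) = D (p * q) -> p * q = q * p.
Proof.
  intros Hp Hq ER ED.
  rewrite (proj_mul_DR p q Hp Hq), (proj_mul_DR q p Hq Hp), ER, ED.
  reflexivity.
Qed.

Lemma proj_commute_D (p q : S) : projection S p -> projection S q ->
  p * q = q * p -> D (p * q) = p * q.
Proof.
  intros Hp Hq C.
  assert (Eq : D (p * q) * q = D (p * q)).
  { rewrite C. apply D_proj_mulr, Hq. }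
  transitivity (D (p * q) * (q * p)).
  - rewrite mul_assoc, Eq. symmetry. apply D_proj_mulr, Hp.
  - rewrite <- C. apply D_left_id.
Qed.

Lemma proj_commute_R (p q : S) : projection S p -> projection S q ->
  p * q = q * p -> R (p * q) = p * q.
Proof.
  intros Hp Hq C.
  assert (pE : p * R (p * q) = R (p * q)).
  { rewrite C. apply R_proj_mull, Hp. }
  transitivity (p * q * R (p * q)).
  - rewrite <- mul_assoc, (R_proj_mull p q Hq), pE. reflexivity.
  - apply R_right_id.
Qed.

End DRCProjections.

Theorem proposition10p1 (S : DRCSemigroup) (p q : S)
  (hp : projection S p) (hq : projection S q) :
  let pq := mul S p q in
  let qp := mul S q p in
  (* (i) <-> (ii) <-> (iii) <-> (iv) *)
  ((pq = qp) <-> (theta S p q = theta S q p /\ delta S p q = delta S q p)) /\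
  ((theta S p q = theta S q p /\ delta S p q = delta S q p) <->
     (theta S p q = theta S q p /\ theta S q p = delta S p q /\ delta S p q = delta S q p)) /\
  ((theta S p q = theta S q p /\ theta S q p = delta S p q /\ delta S p q = delta S q p) <->
     (theta S p q = theta S q p /\ theta S q p = delta S p q /\ delta S p q = delta S q p
      /\ delta S q p = pq /\ pq = qp)).
Proof.
  intros pq qp; unfold pq, qp, theta, delta.
  pose proof (proj_commute_of_DR S p q hp hq) as commute.
  pose proof (proj_commute_D S p q hp hq) as ED.
  pose proof (proj_commute_R S p q hp hq) as ER.
  split; [| split]; split.
  - intros C. now rewrite C.
  - intros [H1 H2]. now apply commute.
  - intros [H1 H2]. pose proof (commute H1 H2) as C.
    repeat split; try assumption.
    now rewrite <- H1, H2, ED, ER.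
  - intros [H1 [_ H2]]. now split.
  - intros [H1 [H3 H2]]. pose proof (commute H1 H2) as C.
    repeat split; auto.
  - intros [H1 [H3 [H2 _]]]. now repeat split.
Qed.
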